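(* For all positive integers $d\le n$ there exists $\mathcal{A}\subset2^{[n]}$ with $\mathrm{VC}(\mathcal{A}\cap\mathcal{A})\le d$, $\mathrm{VC}(\mathcal{A}\cup\mathcal{A})\le d$ and $|\mathcal{A}|>(n/d)^d$.
   Context: $[n]=\{1,\dots,n\}$. $\mathrm{VC}(\mathcal{F})$ is the largest cardinality of a $Y\subset[n]$ with $\{S\cap Y:S\in\mathcal{F}\}=2^Y$. $\mathcal{A}\cap\mathcal{A}=\{S\cap T:S,T\in\mathcal{A}\}$ and $\mathcal{A}\cup\mathcal{A}=\{S\cup T:S,T\in\mathcal{A}\}$. *)

From mathcomp Require Import all_boot all_order all_algebra.
Set Implicit Arguments. Unset Strict Implicit. Unset Printing Implicit Defensive.

(* Ground set [n] is modelled as 'I_n (elements 0..n-1). *)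

Definition shatters (T : finType) (F : {set {set T}}) (Y : {set T}) : bool :=
  [set S :&: Y | S in F] == powerset Y.

Definition VC (T : finType) (F : {set {set T}}) : nat :=
  \max_(Y : {set T} | shatters F Y) #|Y|.

(* A ∩ A = {S ∩ T : S, T ∈ A},  A ∪ A = {S ∪ T : S, T ∈ A}. *)
Definition fam_cap (T : finType) (A : {set {set T}}) : {set {set T}} :=
  [set S :&: U | S in A, U in A].
Definition fam_cup (T : finType) (A : {set {set T}}) : {set {set T}} :=
  [set S :|: U | S in A, U in A].

From mathcomp Require Import all_boot all_order all_algebra.
Import GRing.Theory Num.Theory.

(* Arrange [n] in rows of length d and take the "staircase" sets, which in
   each column i < d are an initial segment of that column, of any length
   0..n/d.  There are (n/d + 1)^d > (n/d)^d of them, and unions and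
   intersections of staircases are again closed downwards in every column.
   A family of such sets cannot shatter two points of the same column (the
   singleton of the upper one is not a trace), so a shattered set has at most
   one point per column, i.e. at most d points. *)

Section ColumnClosed.
Variables (n d : nat) (d_gt0 : (0 < d)%N).

Definition column (x : 'I_n) : 'I_d := Ordinal (ltn_pmod x d_gt0).

Definition column_closed (S : {set 'I_n}) :=
  forall x y : 'I_n, x \in S -> (y <= x)%N -> column y = column x -> y \in S.

Lemma column_closedI S T :
  column_closed S -> column_closed T -> column_closed (S :&: T).
Proof.
move=> cS cT x y; rewrite !inE => /andP[xS xT] le_yx eq_col.
by rewrite (cS x y) ?(cT x y).
Qed.

Lemma column_closedU S T :
  column_closed S -> column_closed T -> column_closed (S :|: T).
Proof.
move=> cS cT x y; rewrite !inE => /orP[xS|xT] le_yx eq_col.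
  by rewrite (cS x y).
by rewrite (cT x y) ?orbT.
Qed.

Lemma shatters_column_inj (F : {set {set 'I_n}}) Y :
  (forall S, S \in F -> column_closed S) -> shatters F Y ->
  {in Y &, injective column}.
Proof.
move=> cF /eqP shY.
suff lt_inj x y : x \in Y -> y \in Y -> column x = column y -> (x <= y)%N -> x = y.
  move=> x y xY yY eq_col; case: (leqP x y) => [|/ltnW] le; first exact: lt_inj.
  by apply/esym/lt_inj.
move=> xY yY eq_col le_xy; apply/eqP/negPn/negP => neq_xy.
have : [set y] \in powerset Y by rewrite powersetE sub1set.
rewrite -shY => /imsetP[S SF trace_y].
have yS : y \in S by have := set11 y; rewrite trace_y inE => /andP[].
have : x \in [set y] by rewrite trace_y inE (cF S SF y) ?xY.
by rewrite inE (negbTE neq_xy).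
Qed.

Lemma VC_column_closed (F : {set {set 'I_n}}) :
  (forall S, S \in F -> column_closed S) -> (VC F <= d)%N.
Proof.
move=> cF; apply/bigmax_leqP => Y shY.
rewrite -(card_in_imset (shatters_column_inj _ _ cF shY)).
by have := max_card (column @: Y); rewrite card_ord.
Qed.

Lemma VC_famI_column_closed (A : {set {set 'I_n}}) :
  (forall S, S \in A -> column_closed S) -> (VC (fam_cap A) <= d)%N.
Proof.
move=> cA; apply: VC_column_closed => _ /imset2P[S T SA TA ->].
exact: column_closedI (cA S SA) (cA T TA).
Qed.

Lemma VC_famU_column_closed (A : {set {set 'I_n}}) :
  (forall S, S \in A -> column_closed S) -> (VC (fam_cup A) <= d)%N.
Proof.
move=> cA; apply: VC_column_closed => _ /imset2P[S T SA TA ->].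
exact: column_closedU (cA S SA) (cA T TA).
Qed.

Variable q : nat.

Definition staircase (h : {ffun 'I_d -> 'I_q.+1}) : {set 'I_n} :=
  [set x : 'I_n | (x %/ d < h (column x))%N].

Lemma column_closed_staircase h : column_closed (staircase h).
Proof.
move=> x y; rewrite !inE => x_below le_yx ->.
exact: leq_ltn_trans (leq_div2r d le_yx) x_below.
Qed.

Hypothesis qd_le_n : (q * d <= n)%N.

Lemma staircase_subset_le h k :
  staircase h \subset staircase k -> forall i, (h i <= k i)%N.
Proof.
move=> sub_hk i; rewrite leqNgt; apply/negP => lt_ki.
have k_lt_q : (k i < q)%N by apply: leq_trans lt_ki _; rewrite -ltnS.
have x_lt_n : (k i * d + i < n)%N.
  apply: leq_trans qd_le_n; apply: (@leq_trans ((k i).+1 * d)).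
    by rewrite mulSn addnC ltn_add2r.
  by rewrite leq_mul2r k_lt_q orbT.
pose x : 'I_n := Ordinal x_lt_n.
have col_x : column x = i by apply: val_inj; rewrite /= modnMDl modn_small.
have row_x : x %/ d = k i by rewrite /= divnMDl // divn_small // addn0.
have : x \in staircase h by rewrite inE col_x row_x.
by move/(subsetP sub_hk); rewrite inE col_x row_x ltnn.
Qed.

Lemma staircase_inj : injective staircase.
Proof.
move=> h k eq_hk; apply/ffunP => i; apply/val_inj/eqP.
by rewrite eqn_leq !staircase_subset_le ?eq_hk.
Qed.

End ColumnClosed.

Lemma ltr_expr_ratio_succ_divn (R : realFieldType) (n d : nat) :
  (0 < d)%N -> ((n%:R / d%:R : R) ^+ d < ((n %/ d).+1 ^ d)%:R)%R.
Proof.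
move=> d_gt0; rewrite natrX ltrXn2r ?divr_ge0 ?ler0n -?lt0n //.
by rewrite ltr_pdivrMr ?ltr0n // -natrM ltr_nat ltn_ceil.
Qed.

Theorem proposition11 (n d : nat) (hd : (0 < d)%N) (hdn : (d <= n)%N) :
  exists A : {set {set 'I_n}},
    [/\ (VC (fam_cap A) <= d)%N, (VC (fam_cup A) <= d)%N &
        ((n%:R / d%:R) ^+ d < (#|A|%:R : rat))%R].
Proof.
pose q := n %/ d.
pose A := [set @staircase n d hd q h | h : {ffun 'I_d -> 'I_q.+1}].
have cA S : S \in A -> @column_closed n d hd S.
  by case/imsetP=> h _ ->; apply: column_closed_staircase.
exists A; split; [exact: VC_famI_column_closed | exact: VC_famU_column_closed |].
rewrite card_imset; last exact/staircase_inj/leq_trunc_div.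
by rewrite card_ffun !card_ord ltr_expr_ratio_succ_divn.
Qed.
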